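(* Let $\mathfrak{g}$ be a finite-dimensional semisimple Lie algebra over an algebraically closed field of characteristic $0$, with root system $R$ and base $\Pi$. Let $S\subset\Pi$ and $n=\operatorname{card}\mathcal{K}(S)$. There exist subsets $S_1,\dots,S_n$ of $\Pi$ such that: (i) $S_1\subset S_2\subset\cdots\subset S_n=S$; (ii) $\mathcal{K}(S_1)\subset\mathcal{K}(S_2)\subset\cdots\subset\mathcal{K}(S_n)$; (iii) $\operatorname{card}\mathcal{K}(S_i)=i$ for $1\leqslant i\leqslant n$.
   Context: For $S\subset\Pi$, $R^S=R\cap\mathbb{Z}S$. For $\alpha\in R$, $H_\alpha$ is the coroot ($\alpha(H_\alpha)=2$, $H_\alpha\in[\mathfrak{g}^\alpha,\mathfrak{g}^{-\alpha}]$) and $\langle\lambda,\alpha^\vee\rangle=\lambda(H_\alpha)$. For connected $S\subset\Pi$ (in the Dynkin diagram), $\varepsilon_S$ is the highest root of the irreducible root system $R^S$ w.r.t. the base $S$. The set $\mathcal{K}(S)$ of subsets of $S$ is defined by induction on $\operatorname{card}S$: $\mathcal{K}(\emptyset)=\emptyset$; if $S_1,\dots,S_r$ are the connected components of $S$, $\mathcal{K}(S)=\mathcal{K}(S_1)\cup\dots\cup\mathcal{K}(S_r)$; if $S$ is connected, $\mathcal{K}(S)=\{S\}\cup\mathcal{K}(\{\alpha\in S:\langle\alpha,\varepsilon_S^\vee\rangle=0\})$. *)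

From HB Require Import structures.
From mathcomp Require Import all_boot all_order all_algebra.
Set Implicit Arguments. Unset Strict Implicit. Unset Printing Implicit Defensive.
Import Order.TTheory GRing.Theory Num.Theory.
Local Open Scope ring_scope.

Section RootSystems.
Variables (R : realFieldType) (d : nat).

Definition dotv (x y : 'rV[R]_d) : R := (x *m y^T) 0 0.

Definition cpair (x y : 'rV[R]_d) : R := 2 * dotv x y / dotv y y.

Variables (T : finType) (v : T -> 'rV[R]_d).

(* The roots are indexed by the finite type T via the injection v. *)
Definition is_root_system : Prop :=
  [/\ injective v,
      (forall a, v a != 0),
      (forall a b, exists z : int, cpair (v b) (v a) = z%:~R),
      (forall a b, exists c, v c = v b - cpair (v b) (v a) *: v a)
    & (forall a b (c : R), v b = c *: v a -> c = 1 \/ c = -1)].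

(* Pi is a base; coord t a is the coefficient of the simple root a in the
   root t. *)
Definition is_base (Pi : {set T}) (coord : T -> T -> int) : Prop :=
  [/\ (forall c : T -> R, \sum_(a in Pi) c a *: v a = 0 ->
          forall a, a \in Pi -> c a = 0),
      (forall t, v t = \sum_(a in Pi) (coord t a)%:~R *: v a)
    & (forall t, (forall a, a \in Pi -> (0 <= coord t a)%R) \/
                 (forall a, a \in Pi -> (coord t a <= 0)%R))].

Variables (Pi : {set T}) (coord : T -> T -> int).

(* R^S = R \cap Z S *)
Definition rootsS (S : {set T}) : {set T} :=
  [set t | [forall a in Pi, (a \notin S) ==> (coord t a == 0)]].

Definition is_highest (S : {set T}) (e : T) : bool :=
  (e \in rootsS S) &&
  [forall t in rootsS S, [forall a in S, (coord t a <= coord e a)%R]].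

Definition highest (S : {set T}) : option T := [pick e | is_highest S e].

Definition dynkin_adj (S : {set T}) : rel T :=
  fun a b => [&& a \in S, b \in S & cpair (v a) (v b) != 0].

Definition dcomp (S : {set T}) (a : T) : {set T} :=
  [set b in S | connect (dynkin_adj S) a b].

Definition dcomponents (S : {set T}) : {set {set T}} :=
  [set dcomp S a | a in S].

Definition dconnected (S : {set T}) : bool :=
  (S != set0) && [forall a in S, forall b in S, connect (dynkin_adj S) a b].

Fixpoint Kfuel (n : nat) (S : {set T}) : {set {set T}} :=
  match n with
  | 0 => set0
  | n'.+1 =>
    if S == set0 then set0 else
    if dconnected S then
      S |: (match highest S with
            | Some e => Kfuel n' [set a in S | cpair (v a) (v e) == 0]
            | None => set0
            end)
    else \bigcup_(C in dcomponents S) Kfuel n' C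
  end.

Definition Kset (S : {set T}) : {set {set T}} := Kfuel #|S| S.

End RootSystems.

From HB Require Import structures.
From mathcomp Require Import all_boot all_order all_algebra.
Set Implicit Arguments. Unset Strict Implicit. Unset Printing Implicit Defensive.
Import Order.TTheory GRing.Theory Num.Theory.

(* If S is
   disconnected, S = C u B with C and B orthogonal, K(S) = K(C) u K(B) is a
   disjoint union, and a chain for C followed by C u (a chain for B) is a
   chain for S.  If S is connected, K(S) = {S} u K(S') with S' the part of S
   orthogonal to the highest root, a proper subset of S since the highest root
   lies in the span of S; a chain for S' extended by S is a chain for S. *)

Lemma sorted_rel_last (T : eqType) (r : rel T) (x0 : T) (s : seq T) x :
  reflexive r -> transitive r -> sorted r s -> x \in s -> r x (last x0 s).
Proof.
move=> r_refl r_trans; elim: s x => // y [|z s] IH x /=.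
  by rewrite inE => _ /eqP ->.
case/andP=> ryz path_zs; rewrite inE => /predU1P [->|xs].
  exact: r_trans ryz (IH z path_zs (mem_head _ _)).
exact: IH x path_zs xs.
Qed.

Section DotProduct.
Variables (R : realFieldType) (d : nat).
Local Open Scope ring_scope.

Lemma dotvC (x y : 'rV[R]_d) : dotv x y = dotv y x.
Proof. by rewrite /dotv -(trmxK (x *m y^T)) trmx_mul trmxK mxE. Qed.

Lemma dotvv_eq0 (x : 'rV[R]_d) : (dotv x x == 0) = (x == 0).
Proof.
apply/eqP/eqP => [|->]; last by rewrite /dotv mul0mx mxE.
rewrite /dotv mxE => sum_sq0; apply/matrixP => i j; rewrite (ord1 i) !mxE.
have sq_ge0 k : true -> 0 <= x 0 k * x^T k 0 by rewrite mxE -expr2 sqr_ge0.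
move: (psumr_eq0P sq_ge0 sum_sq0) => /(_ j isT) /eqP.
by rewrite mxE mulf_eq0 orbb => /eqP.
Qed.

Lemma dotv_suml (I : finType) (P : pred I) (c : I -> R) (w : I -> 'rV[R]_d) y :
  dotv (\sum_(i | P i) c i *: w i) y = \sum_(i | P i) c i * dotv (w i) y.
Proof.
by rewrite /dotv mulmx_suml summxE; apply: eq_bigr => i _; rewrite -scalemxAl mxE.
Qed.

End DotProduct.

Section KSets.
Variables (R : realFieldType) (d : nat) (T : finType) (v : T -> 'rV[R]_d)
  (Pi : {set T}) (coord : T -> T -> int).
Local Open Scope ring_scope.
Hypothesis v_neq0 : forall a, v a != 0.
Hypothesis v_coord : forall t, v t = \sum_(a in Pi) (coord t a)%:~R *: v a.

Implicit Types (S A B C X : {set T}) (a b e : T).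

Local Notation K := (Kfuel v Pi coord).
Local Notation Ks := (Kset v Pi coord).

Lemma dotvv_neq0 a : dotv (v a) (v a) != 0.
Proof. by rewrite dotvv_eq0. Qed.

Lemma cpair_eq0 a b : (cpair (v a) (v b) == 0) = (dotv (v a) (v b) == 0).
Proof.
rewrite /cpair !mulf_eq0 invr_eq0 (negbTE (dotvv_neq0 b)) orbF.
by rewrite pnatr_eq0.
Qed.

Lemma cpair_eq0C a b : (cpair (v a) (v b) == 0) = (cpair (v b) (v a) == 0).
Proof. by rewrite !cpair_eq0 dotvC. Qed.

Lemma dynkin_adj_sym S : symmetric (dynkin_adj v S).
Proof.
move=> a b; rewrite /dynkin_adj [cpair (v b) _ == 0]cpair_eq0C.
by case: (a \in S); case: (b \in S).
Qed.

Lemma rootsS_dotv_eq0 S e x : e \in rootsS Pi coord S ->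
  (forall a, a \in S -> dotv (v a) x = 0) -> dotv (v e) x = 0.
Proof.
rewrite inE => /forall_inP e_in_S S_orth.
rewrite v_coord dotv_suml big1 // => a aPi.
have [aS|aS] := boolP (a \in S); first by rewrite S_orth ?mulr0.
by rewrite (eqP (implyP (e_in_S a aPi) aS)) mul0r.
Qed.

Definition Kcore (S : {set T}) : {set T} :=
  if highest Pi coord S is Some e then [set a in S | cpair (v a) (v e) == 0]
  else set0.

Lemma Kcore_sub S : Kcore S \subset S.
Proof.
rewrite /Kcore; case: highest => [e|]; last exact: sub0set.
by apply/subsetP => a; rewrite inE => /andP[].
Qed.

Lemma Kcore_proper S : dconnected v S -> Kcore S \proper S.
Proof.
case/andP=> S0 _; rewrite properEneq Kcore_sub andbT.
rewrite /Kcore /highest; case: pickP => [e /andP[e_root _]|_]; last by rewrite eq_sym.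
apply/eqP => Se; move/eqP: (dotvv_neq0 e); apply.
apply: rootsS_dotv_eq0 e_root _ => a; rewrite -{1}Se inE => /andP[_].
by rewrite cpair_eq0 => /eqP.
Qed.

Lemma dcomp_sub S a : dcomp v S a \subset S.
Proof. by apply/subsetP => b; rewrite inE => /andP[]. Qed.

Lemma mem_dcomp S a : a \in S -> a \in dcomp v S a.
Proof. by move=> aS; rewrite inE aS connect0. Qed.

Lemma dcomp_dconnected S a : dconnected v S -> a \in S -> dcomp v S a = S.
Proof.
case/andP=> _ /forall_inP S_conn aS; apply/eqP; rewrite eqEsubset dcomp_sub.
by apply/subsetP => b bS; rewrite inE bS (forall_inP (S_conn a aS)).
Qed.

Lemma dcomp_proper S a : a \in S -> ~~ dconnected v S -> dcomp v S a \proper S.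
Proof.
move=> aS; apply: contraNT; rewrite properEneq dcomp_sub andbT negbK => /eqP Sa.
rewrite /dconnected; apply/andP; split; first by apply/set0Pn; exists a.
apply/forall_inP => b bS; apply/forall_inP => c cS.
rewrite -Sa !inE in bS cS; case/andP: bS => _ ab; case/andP: cS => _ ac.
by apply: connect_trans ac; rewrite (sym_connect_sym (dynkin_adj_sym S)).
Qed.

Lemma dcomponents_dconnected S : dconnected v S -> dcomponents v S = [set S].
Proof.
move=> S_conn; case/andP: (S_conn) => /set0Pn[a aS] _.
apply/setP => C; rewrite inE; apply/imsetP/eqP => [[b bS ->]|->].
  exact: dcomp_dconnected.
by exists a; rewrite ?dcomp_dconnected.
Qed.

Lemma Kfuel_set0 n : K n set0 = set0.
Proof. by case: n => //= n; rewrite eqxx. Qed.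

Lemma KfuelS n S : K n.+1 S =
  if S == set0 then set0 else
  if dconnected v S then S |: K n (Kcore S)
  else \bigcup_(C in dcomponents v S) K n C.
Proof. by rewrite /= /Kcore; case: highest; rewrite ?Kfuel_set0. Qed.

Lemma Kfuel_fuel n m S : (#|S| <= n)%N -> (#|S| <= m)%N -> K n S = K m S.
Proof.
elim: n m S => [|n IH] m S hn hm; have [->|S0] := eqVneq S set0; rewrite ?Kfuel_set0 //.
  by move: S0; rewrite -card_gt0 ltnNge hn.
case: m hm => [|m] hm; first by move: S0; rewrite -card_gt0 ltnNge hm.
rewrite !KfuelS (negbTE S0); case: ifP => S_conn.
  have lt := proper_card (Kcore_proper S_conn).
  by congr (_ |: _); apply: IH; rewrite -ltnS (leq_trans lt).
apply: eq_bigr => _ /imsetP[a aS ->].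
have lt := proper_card (dcomp_proper aS (negbT S_conn)).
by apply: IH; rewrite -ltnS (leq_trans lt).
Qed.

Lemma Kfuel_Kset n S : (#|S| <= n)%N -> K n S = Ks S.
Proof. by move=> hn; apply: Kfuel_fuel. Qed.

Lemma Kset0 : Ks set0 = set0.
Proof. by rewrite /Kset cards0. Qed.

Lemma KsetE S : S != set0 -> Ks S =
  if dconnected v S then S |: Ks (Kcore S)
  else \bigcup_(C in dcomponents v S) Ks C.
Proof.
move=> S0; rewrite /Kset -(prednK (_ : 0 < #|S|)%N) ?card_gt0 // KfuelS (negbTE S0).
case: ifP => S_conn.
  have lt := proper_card (Kcore_proper S_conn).
  by rewrite Kfuel_Kset // -ltnS prednK ?card_gt0.
apply: eq_bigr => _ /imsetP[a aS ->].
have lt := proper_card (dcomp_proper aS (negbT S_conn)).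
by rewrite Kfuel_Kset // -ltnS prednK ?card_gt0.
Qed.

Lemma Kset_dconnected S : dconnected v S -> Ks S = S |: Ks (Kcore S).
Proof. by move=> S_conn; rewrite KsetE ?S_conn //; case/andP: S_conn. Qed.

Lemma Kset_dcomponents S : Ks S = \bigcup_(C in dcomponents v S) Ks C.
Proof.
have [->|S0] := eqVneq S set0; first by rewrite /dcomponents imset0 big_set0 Kset0.
have [S_conn|S_disconn] := boolP (dconnected v S).
  by rewrite dcomponents_dconnected // big_set1.
by rewrite KsetE // (negbTE S_disconn).
Qed.

Lemma mem_Kset S X : X \in Ks S -> X != set0 /\ X \subset S.
Proof.
elim: {S}_.+1 {-2}S (ltnSn #|S|) => // n IH S.
rewrite ltnS => hS; have [->|S0] := eqVneq S set0; first by rewrite Kset0 inE.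
rewrite KsetE //; case: ifP => [S_conn|/negbT S_disconn].
  rewrite in_setU1 => /predU1P[->|]; first by [].
  have lt := proper_card (Kcore_proper S_conn).
  case/IH=> [|-> XS]; first exact: leq_trans lt hS.
  by split=> //; apply: subset_trans XS (Kcore_sub S).
case/bigcupP => _ /imsetP[a aS ->].
have lt := proper_card (dcomp_proper aS S_disconn).
case/IH=> [|-> XS]; first exact: leq_trans lt hS.
by split=> //; apply: subset_trans XS (dcomp_sub S a).
Qed.

Definition perp A B := forall a b, a \in A -> b \in B -> cpair (v a) (v b) = 0.

Lemma perp_sym A B : perp A B -> perp B A.
Proof. by move=> AB a b aB bA; apply/eqP; rewrite cpair_eq0C (AB b a bA aB). Qed.

Lemma perp_subr A B X : perp A B -> X \subset B -> perp A X.
Proof. by move=> AB XB a b aA bX; apply: AB => //; apply: (subsetP XB). Qed.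

Lemma perp_disjoint A B : perp A B -> [disjoint A & B].
Proof.
move=> AB; apply/pred0P => a /=; apply/negbTE/andP => -[aA aB].
by move/eqP: (AB a a aA aB); rewrite cpair_eq0 (negbTE (dotvv_neq0 a)).
Qed.

Lemma connect_perp A B a b : perp A B -> a \in A ->
  connect (dynkin_adj v (A :|: B)) a b -> (b \in A) && connect (dynkin_adj v A) a b.
Proof.
move=> AB aA /connectP[p]; elim: p a aA => [|c p IH] a aA /=.
  by move=> _ ->; rewrite aA connect0.
case/andP=> /and3P[_ cAB ac] path_cp b_last.
have cA : c \in A.
  by case/setUP: cAB => // cB; rewrite AB ?eqxx in ac.
case/andP: (IH c cA path_cp b_last) => -> cb.
by apply: connect_trans cb; apply: connect1; rewrite /dynkin_adj aA cA.
Qed.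

Lemma dcomp_setU_perp A B a : perp A B -> a \in A ->
  dcomp v (A :|: B) a = dcomp v A a.
Proof.
move=> AB aA; apply/setP => b; rewrite !inE.
apply/andP/andP => [[_ /(connect_perp AB aA)/andP[]] // | [bA ab]].
split; first by rewrite bA.
apply: connect_sub ab => x y xy; apply: connect1.
by move: xy; rewrite /dynkin_adj !inE => /and3P[-> -> ->].
Qed.

Lemma dcomponents_setU_perp A B : perp A B ->
  dcomponents v (A :|: B) = dcomponents v A :|: dcomponents v B.
Proof.
move=> AB; rewrite /dcomponents imsetU; congr (_ :|: _).
  by apply: eq_in_imset => a; apply: dcomp_setU_perp.
by apply: eq_in_imset => a aB; rewrite setUC dcomp_setU_perp //; apply: perp_sym.
Qed.

Lemma Kset_setU_perp A B : perp A B -> Ks (A :|: B) = Ks A :|: Ks B.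
Proof.
move=> AB; rewrite Kset_dcomponents dcomponents_setU_perp //.
by rewrite bigcup_setU -!Kset_dcomponents.
Qed.

Lemma card_Kset_setU_perp A B : perp A B ->
  #|Ks (A :|: B)| = (#|Ks A| + #|Ks B|)%N.
Proof.
move=> AB; rewrite Kset_setU_perp //; apply/eqP; rewrite (leq_card_setU _ _).2.
apply/pred0P => X /=; apply/negbTE/andP => -[/mem_Kset[X0 XA] /mem_Kset[_ XB]].
case/set0Pn: X0 => x xX; move/pred0P/(_ x): (perp_disjoint AB) => /=.
by rewrite (subsetP XA x xX) (subsetP XB x xX).
Qed.

Lemma dconnectedN_split S : S != set0 -> ~~ dconnected v S ->
  exists C B, [/\ C \proper S, B \proper S, perp C B & S = C :|: B].
Proof.
case/set0Pn=> a aS S_disconn; set C := dcomp v S a.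
have aC : a \in C := mem_dcomp aS.
exists C, (S :\: C); split; first exact: dcomp_proper.
- rewrite properEneq subsetDl andbT; apply/eqP => /setP/(_ a).
  by rewrite in_setD aC aS.
- move=> x y; rewrite !inE => /andP[xS ax] /andP[yNC yS]; apply/eqP.
  apply: contraNT yNC; rewrite yS => xy; apply: connect_trans ax (connect1 _).
  by rewrite /dynkin_adj xS yS.
- by rewrite -{1}(setID S C) (setIidPr (dcomp_sub S a)).
Qed.

Definition Kle A B := (A \subset B) && (Ks A \subset Ks B).

Lemma Kle_refl : reflexive Kle.
Proof. by move=> A; rewrite /Kle !subxx. Qed.

Lemma Kle_trans : transitive Kle.
Proof.
move=> B A C /andP[AB KAB] /andP[BC KBC].
by rewrite /Kle (subset_trans AB BC) (subset_trans KAB KBC).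
Qed.

(* [s] lists S_1, ..., S_n; the chain of the theorem is [i |-> nth set0 s i.-1]. *)
Definition Kchain S (s : seq {set T}) :=
  [/\ sorted Kle s, last set0 s = S & [seq #|Ks X| | X <- s] = iota 1 (size s)].

Lemma Kchain_nth S s i : Kchain S s -> (i < size s)%N -> #|Ks (nth set0 s i)| = i.+1.
Proof.
case=> _ _ card_s lt_i.
by rewrite -(nth_map set0 0%N (fun X => #|Ks X|)) // card_s nth_iota.
Qed.

Lemma Kchain_step S s i : Kchain S s -> (i.+1 < size s)%N ->
  Kle (nth set0 s i) (nth set0 s i.+1).
Proof. by case=> /(sortedP set0) sorted_s _ _; apply: sorted_s. Qed.

Lemma Kchain_size S s : Kchain S s -> size s = #|Ks S|.
Proof.
case: s => [|X s] hs; have [_ <- _] := hs; first by rewrite Kset0 cards0.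
by rewrite -nth_last (Kchain_nth hs).
Qed.

Lemma Kchain_Kle S s X : Kchain S s -> X \in s -> Kle X S.
Proof. by case=> sorted_s <- _; apply: sorted_rel_last Kle_refl Kle_trans sorted_s. Qed.

Lemma Kchain_sub S s X : Kchain S s -> X \in s -> X \subset S.
Proof. by move=> hs /(Kchain_Kle hs)/andP[]. Qed.

Lemma Kchain0 : Kchain set0 [::].
Proof. by split; rewrite //= Kset0. Qed.

Lemma Kchain_rcons S' S s : Kchain S' s -> S' \proper S ->
  Ks S = S |: Ks S' -> Kchain S (rcons s S).
Proof.
move=> hs S'S KS; have [sorted_s last_s card_s] := hs.
have S_notin : S \notin Ks S'.
  by apply/negP => /mem_Kset[_ SS']; rewrite properE SS' andbF in S'S.
split; last 1 first.
- rewrite map_rcons card_s size_rcons -[(size s).+1]addn1 iotaD cats1 add1n /=.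
  by rewrite KS cardsU1 S_notin (Kchain_size hs).
- case: s sorted_s last_s {hs card_s} => [//|X s] /= path_s last_s.
  by rewrite rcons_path path_s last_s /Kle (proper_sub S'S) KS subsetUr.
- by rewrite last_rcons.
Qed.

Lemma Kchain_cat C B sC sB : perp C B -> Kchain C sC -> Kchain B sB ->
  Kchain (C :|: B) (sC ++ [seq C :|: X | X <- sB]).
Proof.
move=> CB hC hB; have [sorted_C last_C card_C] := hC.
have [sorted_B last_B card_B] := hB.
have KsCU X : X \in sB -> Ks (C :|: X) = Ks C :|: Ks X.
  by move=> XsB; apply/Kset_setU_perp/(perp_subr CB)/(Kchain_sub hB).
split.
- have sorted_pw := sorted_pairwise Kle_trans.
  rewrite sorted_pw pairwise_cat -!sorted_pw sorted_C /=; apply/andP; split.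
    apply/allrelP => X _ XsC /mapP[Y YsB ->]; apply: Kle_trans (Kchain_Kle hC XsC) _.
    by rewrite /Kle subsetUl KsCU // subsetUl.
  apply: (homo_sorted_in (P := [in sB])) sorted_B; last exact/allP.
  move=> X Y XsB YsB /andP[XY KXY].
  by rewrite /Kle setUS // !KsCU // setUS.
- have := last_map (setU C) sB set0; rewrite setU0 => last_CB.
  by rewrite last_cat last_C last_CB last_B.
- rewrite map_cat card_C size_cat size_map iotaD -map_comp; congr (_ ++ _).
  have /eq_in_map -> : {in sB, (fun X => #|Ks X|) \o setU C =1
                                 addn (size sC) \o (fun X => #|Ks X|)}.
    move=> X XsB /=; rewrite card_Kset_setU_perp ?(Kchain_size hC) //.
    exact/(perp_subr CB)/(Kchain_sub hB).
  by rewrite map_comp card_B -iotaDl addnC.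
Qed.

Lemma Kchain_exists S : exists s, Kchain S s.
Proof.
elim: {S}_.+1 {-2}S (ltnSn #|S|) => // n IH S; rewrite ltnS => hS.
have IHp X : X \proper S -> exists s, Kchain X s.
  by move=> XS; apply: IH; apply: leq_trans (proper_card XS) hS.
have [->|S0] := eqVneq S set0; first by exists [::]; apply: Kchain0.
have [S_conn|S_disconn] := boolP (dconnected v S).
  have [s hs] := IHp _ (Kcore_proper S_conn).
  exists (rcons s S); apply: Kchain_rcons hs (Kcore_proper S_conn) _.
  exact: Kset_dconnected.
have [C [B [CS BS CB ->]]] := dconnectedN_split S0 S_disconn.
have [sC hC] := IHp _ CS; have [sB hB] := IHp _ BS.
by exists (sC ++ [seq C :|: X | X <- sB]); apply: Kchain_cat.
Qed.

End KSets.

Theorem lemma5p1 (R : realFieldType) (d : nat) (T : finType)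
    (v : T -> 'rV[R]_d) (Pi : {set T}) (coord : T -> T -> int) (S : {set T}) :
  is_root_system v -> is_base v Pi coord -> S \subset Pi ->
  let n := #|Kset v Pi coord S| in
  exists Ss : nat -> {set T},
    [/\ (forall i, (1 <= i <= n)%N -> Ss i \subset Pi),
        (forall i, (1 <= i < n)%N -> Ss i \subset Ss i.+1),
        (0 < n)%N -> Ss n = S,
        (forall i, (1 <= i < n)%N ->
           Kset v Pi coord (Ss i) \subset Kset v Pi coord (Ss i.+1))
      & (forall i, (1 <= i <= n)%N -> #|Kset v Pi coord (Ss i)| = i)].
Proof.
move=> [_ v_neq0 _ _ _] [_ v_coord _] SPi n.
have [s hs] := Kchain_exists v_neq0 v_coord S.
have size_s : size s = n := Kchain_size hs.
have [_ last_s _] := hs.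
have Kle_step i : (1 <= i < n)%N -> Kle v Pi coord (nth set0 s i.-1) (nth set0 s i).
  case/andP=> i_gt0 lt_in; rewrite -{2}(prednK i_gt0).
  by apply: Kchain_step hs _; rewrite prednK // size_s.
exists (fun i => nth set0 s i.-1); split.
- move=> i /andP[i_gt0 le_in]; apply: subset_trans SPi.
  by apply: (Kchain_sub hs); apply: mem_nth; rewrite size_s prednK.
- by move=> i /Kle_step/andP[].
- by rewrite -size_s nth_last last_s.
- by move=> i /Kle_step/andP[].
- move=> i /andP[i_gt0 le_in].
  by rewrite (Kchain_nth hs) ?prednK // size_s.
Qed.
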